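(* Let $\mu\in\mathcal{L}$. If $\mu$ has an atom at $x\in\mathbb{R}$, then $W(\mu)$ has an atom at $e^{-ix}$ with $W(\mu)(\{e^{-ix}\})=\mu(\{x\})$. Conversely, if $e^{-ix}$ is an atom of $W(\mu)$, then there is a unique $n\in\mathbb{Z}$ such that $\mu$ has an atom at $x+2\pi n$, and $\mu(\{x+2\pi n\})=W(\mu)(\{e^{-ix}\})$.
   Context: For a probability measure $\mu$ on $\mathbb{R}$, $G_\mu(z)=\int\frac{d\mu(x)}{z-x}$ and $F_\mu=1/G_\mu$ on the upper half-plane $\mathbb{C}^+$. $\mathcal{L}$ is the set of probability measures $\mu$ on $\mathbb{R}$ with $F_\mu(z+2\pi)=F_\mu(z)+2\pi$ for all $z\in\mathbb{C}^+$. $W(\mu)$ is the probability measure on the unit circle obtained as the push-forward of $\mu$ under $x\mapsto e^{-ix}$. *)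

From HB Require Import structures.
From mathcomp Require Import all_boot all_order all_algebra.
From mathcomp Require Import all_classical all_reals all_analysis.
From mathcomp Require Import complex.
Set Implicit Arguments. Unset Strict Implicit. Unset Printing Implicit Defensive.
Import Order.TTheory GRing.Theory Num.Theory.
Import numFieldNormedType.Exports.
Local Open Scope classical_set_scope.
Local Open Scope ring_scope.
Local Open Scope complex_scope.

Section Defs.
Variable R : realType.

(* Cauchy transform G_mu(z) = int dmu(x)/(z-x), written through its real and
   imaginary parts: for z = a + i b,
   1/(z-x) = (a-x)/((a-x)^2+b^2) - i b/((a-x)^2+b^2). *)
Definition cauchyG (mu : probability R R) (z : R[i]) : R[i] :=
  let a := complex.Re z in let b := complex.Im z in
  (Rintegral mu setT (fun x : R => (a - x) / ((a - x) ^+ 2 + b ^+ 2)))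
  +i* (- Rintegral mu setT (fun x : R => b / ((a - x) ^+ 2 + b ^+ 2))).

Definition reciprocalF (mu : probability R R) (z : R[i]) : R[i] :=
  (cauchyG mu z)^-1.

Definition inL (mu : probability R R) : Prop :=
  forall z : R[i], 0 < complex.Im z ->
    reciprocalF mu (z + (2 * pi)%:C) = reciprocalF mu z + (2 * pi)%:C.

(* e^{-ix}, a point of the unit circle in C = R^2 (coordinates (Re, Im)). *)
Definition expmi (x : R) : R * R := (cos x, - sin x).

Definition Wmap (mu : probability R R) : set (R * R) -> \bar R :=
  pushforward mu expmi.

End Defs.

From HB Require Import structures.
From mathcomp Require Import all_boot all_order all_algebra.
From mathcomp Require Import all_classical all_reals all_analysis.
From mathcomp Require Import complex.
From mathcomp Require Import measurable_realfun lra.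
Import Order.TTheory GRing.Theory Num.Theory.
Import numFieldNormedType.Exports.
Local Open Scope classical_set_scope.
Local Open Scope ring_scope.

(* If mu has an atom of mass a at p, then -Im G_mu(p + iy) >= a / y, and since
   |Re w^-1| |Im w| <= 1 this forces |Re F_mu(p + iy)| <= y / a.  Atoms of
   masses a and b at p and p + 2 pi k (k >= 1) would then give, for
   y = min(a, b), both |Re F_mu(p + iy)| <= 1 and
   |Re F_mu(p + iy) + 2 pi k| = |Re F_mu(p + 2 pi k + iy)| <= 1, impossible
   since 2 pi k > 2.  So the countable coset x + 2 pi Z, which is the preimage
   of e^{-ix}, carries at most one atom of mu, and its mass is that of the
   atom, or 0. *)

Section atoms.
Context d (T : measurableType d) (R : realType).
Variable mu : {measure set T -> \bar R}.

Lemma negligible_countable (A : set T) : countable A ->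
  (forall t, A t -> mu.-negligible [set t]) -> mu.-negligible A.
Proof.
move=> /countable_injP[f injf] A1.
apply: (negligibleS (A := \bigcup_k (A `&` f @^-1` [set k]))).
  by move=> t At; exists (f t).
apply: negligible_bigcup => k.
have [[t [At ftk]]|/forallNP Ak] := pselect (exists t, A t /\ f t = k).
  apply: (negligibleS _ (A1 t At)) => s [As /= fsk].
  by apply: injf; rewrite ?inE // fsk ftk.
apply: (negligibleS _ (negligible_set0 mu)) => s [As /= fsk].
by apply: (Ak s).
Qed.

Lemma Rintegral_ge_atom (f : T -> R) (p : T) : measurable [set p] ->
  mu.-integrable setT (EFin \o f) -> (forall t, 0 <= f t) ->
  f p * fine (mu [set p]) <= \int[mu]_t f t.
Proof.
move=> mp intf f0.
have -> : f p * fine (mu [set p]) = \int[mu]_(t in [set p]) f t.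
  rewrite (@eq_Rintegral _ _ _ _ _ (cst (f p))) ?Rintegral_cst //.
  by move=> t; rewrite inE => ->.
rewrite -(setUv [set p]) Rintegral_setU ?setUv //; last 2 first.
- exact: measurableC.
- by apply/disj_setPS => t [/= ->].
by rewrite lerDl Rintegral_ge0.
Qed.

Hypothesis measurable_set1T : forall t : T, measurable [set t].

Lemma measure_countable_null (A : set T) : countable A ->
  (forall t, A t -> mu [set t] = 0%E) -> mu A = 0%E.
Proof.
move=> cA A0; apply: measure_negligible; first exact: countable_measurable.
apply: negligible_countable => // t At.
exact/(negligibleP mu (measurable_set1T t))/A0.
Qed.

Lemma measure_countable_atom (A : set T) (t : T) : countable A -> A t ->
  (forall s, A s -> s <> t -> mu [set s] = 0%E) -> mu A = mu [set t].
Proof.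
move=> cA At A0.
have null : mu (A `\ t) = 0%E.
  apply: measure_countable_null => [|s [As /= st]]; last exact: A0.
  by apply: (sub_countable _ cA); apply: subset_card_le => s [].
have mA := countable_measurable measurable_set1T cA.
rewrite (measureDI mu mA (measurable_set1T t)).
(* [rewrite null] fails: measureDI sees mu through its content structure *)
rewrite [X in (X + _)%E](_ : _ = 0%E) ?add0e; last exact: null.
by congr (mu _); apply/setIidr => s /= ->.
Qed.

End atoms.

Section circle.
Context {R : realType}.
Implicit Types (x t r : R) (n : int).

Lemma periodicz {f : R -> R} {T : R} : periodic f T ->
  forall n a, f (a + T * n%:~R) = f a.
Proof.
move=> fT.
have nat_case k a : f (a + T * k%:R) = f a by rewrite mulr_natr; exact: periodicn.
case=> k a; first exact: nat_case.
rewrite -(nat_case k.+1 (a + T * (Negz k)%:~R)).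
by rewrite -addrA -mulrDr NegzE intrN addNr mulr0 addr0.
Qed.

Lemma cos_periodic : periodic (@cos R) (2 * pi).
Proof. by rewrite mulr_natl; exact: cosD2pi. Qed.

Lemma sin_periodic : periodic (@sin R) (2 * pi).
Proof. by rewrite mulr_natl; exact: sinD2pi. Qed.

Lemma cos_eq1_itv r : 0 <= r < 2 * pi -> cos r = 1 -> r = 0.
Proof.
have cos_inj0 u : 0 <= u <= pi -> cos u = 1 -> u = 0.
  by move=> u0 cu; apply: cos_inj; rewrite ?cos0 // in_itv /= ?lexx ?pi_ge0.
move=> /andP[r0 r2pi] cr; have [rpi|pir] := lerP r pi.
  by apply: cos_inj0; rewrite ?r0.
suff : 2 * pi - r = 0 by move=> /eqP; rewrite subr_eq0 => /eqP rE; lra.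
apply: cos_inj0; last by rewrite addrC cos_periodic cosN.
by apply/andP; split; lra.
Qed.

Lemma cos_eq1 r : cos r = 1 -> exists n, r = 2 * pi * n%:~R.
Proof.
move=> cr; have pi2_gt0 : 0 < 2 * pi :> R by rewrite mulr_gt0 ?pi_gt0.
set n := Num.floor (r / (2 * pi)); exists n.
have /andP[nr rn] := floor_itv (r / (2 * pi)); rewrite -/n in nr rn.
rewrite ler_pdivlMr // in nr; rewrite ltr_pdivrMr // in rn.
apply/eqP; rewrite -subr_eq0; apply/eqP/cos_eq1_itv.
  by rewrite intrD in rn; apply/andP; split; lra.
by rewrite -[RHS]cr -[in RHS](periodicz cos_periodic (- n)) intrN mulrN.
Qed.

Definition coset2pi x : set R := range (fun n : int => x + 2 * pi * n%:~R).

Lemma coset2pi_refl x : coset2pi x x.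
Proof. by exists 0; rewrite ?mulr0 ?addr0. Qed.

Lemma countable_coset2pi x : countable (coset2pi x).
Proof. exact: (sub_countable (card_image_le _ _)). Qed.

Lemma expmi_preimage x : @expmi R @^-1` [set expmi x] = coset2pi x.
Proof.
apply/seteqP; split => t /=; last first.
  case=> n _ <-.
  by rewrite /expmi (periodicz cos_periodic) (periodicz sin_periodic).
case=> ct /eqP; rewrite eqr_opp => /eqP st.
have [n tx] : exists n, t - x = 2 * pi * n%:~R.
  by apply: cos_eq1; rewrite cosB ct st -!expr2 cos2Dsin2.
by exists n => //; rewrite -tx addrC subrK.
Qed.

End circle.

Section cauchy.
Context {R : realType}.
Implicit Types (mu : probability R R) (p y t : R).

(* pi times the Poisson kernel of the upper half-plane *)
Definition poisson_kernel p y t : R := y / ((p - t) ^+ 2 + y ^+ 2).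

Lemma poisson_kernel_ge0 p y t : 0 <= y -> 0 <= poisson_kernel p y t.
Proof. by move=> y0; rewrite divr_ge0 ?addr_ge0 ?sqr_ge0. Qed.

Lemma poisson_kernel_le p y t : 0 < y -> poisson_kernel p y t <= y^-1.
Proof.
move=> y0; rewrite ler_pdivrMr ?ltr_pwDr ?exprn_gt0 ?sqr_ge0 //.
by rewrite ler_pdivlMl // -expr2 lerDr sqr_ge0.
Qed.

Lemma poisson_kernel_center p y : poisson_kernel p y p = y^-1.
Proof.
rewrite /poisson_kernel subrr expr0n add0r expr2 invfM mulrA.
by have [->|y0] := eqVneq y 0; rewrite ?invr0 ?mulr0 // divff ?mul1r.
Qed.

Lemma continuous_poisson_kernel p y : 0 < y -> continuous (poisson_kernel p y).
Proof.
move=> y0 t.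
have csq : {for t, continuous (fun t => (p - t) ^+ 2 + y ^+ 2)}.
  apply: continuousD; last exact: cst_continuous.
  apply: (@continuous_comp _ _ _ (fun t => p - t) (fun u => u ^+ 2)).
    by apply: continuousB; [exact: cst_continuous | exact: cvg_id].
  exact: exprn_continuous.
have cy : {for t, continuous (@cst R R y)} by exact: cst_continuous.
have := continuousM cy (continuousV _ csq); apply.
by rewrite gt_eqF // ltr_pwDr ?exprn_gt0 ?sqr_ge0.
Qed.

Lemma integrable_poisson_kernel mu p y : 0 < y ->
  mu.-integrable setT (EFin \o poisson_kernel p y).
Proof.
move=> y0; apply: (@le_integrable _ _ _ _ _ measurableT _ (EFin \o cst y^-1)).
- apply/measurable_EFinP.
  by apply: continuous_measurable_fun; exact: continuous_poisson_kernel.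
- move=> t _ /=; rewrite lee_fin.
  by rewrite !ger0_norm ?poisson_kernel_le ?poisson_kernel_ge0 ?invr_ge0 ?ltW.
- exact: finite_measure_integrable_cst.
Qed.

Lemma normr_Re_invc_mulIm (z : R[i]) : `|complex.Re z^-1| * `|complex.Im z| <= 1.
Proof.
case: z => a b /=.
rewrite normrM normfV [`|_ + _|]ger0_norm ?addr_ge0 ?sqr_ge0 // mulrAC.
have [->|n0] := eqVneq (a ^+ 2 + b ^+ 2) 0; first by rewrite invr0 mulr0.
rewrite ler_pdivrMr ?lt_def ?n0 ?addr_ge0 ?sqr_ge0 // mul1r.
rewrite -[a ^+ 2]real_normK ?num_real // -[b ^+ 2]real_normK ?num_real //.
by have := normr_ge0 a; have := normr_ge0 b; nra.
Qed.

Lemma Im_cauchyG mu p y :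
  complex.Im (cauchyG mu (p +i* y)%C) = - \int[mu]_t poisson_kernel p y t.
Proof. by []. Qed.

Lemma atom_Re_reciprocalF mu p y : 0 < y ->
  fine (mu [set p]) * `|complex.Re (reciprocalF mu (p +i* y)%C)| <= y.
Proof.
move=> y0; set P := \int[mu]_t poisson_kernel p y t.
have P_ge : y^-1 * fine (mu [set p]) <= P.
  rewrite -(poisson_kernel_center p y).
  apply: Rintegral_ge_atom; first exact: measurable_set1.
  - exact: integrable_poisson_kernel.
  - by move=> t; apply: poisson_kernel_ge0; exact: ltW.
have P0 : 0 <= P.
  by apply: Rintegral_ge0 => t _; apply: poisson_kernel_ge0; exact: ltW.
have ReP : `|complex.Re (reciprocalF mu (p +i* y)%C)| * P <= 1.
  have := normr_Re_invc_mulIm (cauchyG mu (p +i* y)%C).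
  by rewrite Im_cauchyG normrN (ger0_norm P0).
have := le_trans (ler_wpM2l (normr_ge0 _) P_ge) ReP.
rewrite mulrCA => /(ler_wpM2l (ltW y0)).
by rewrite mulVKf ?gt_eqF // mulr1 mulrC.
Qed.

Lemma reciprocalF_shift_nat mu (k : nat) (z : R[i]) :
  inL mu -> 0 < complex.Im z ->
  reciprocalF mu (z + (2 * pi * k%:R)%:C)%C =
    (reciprocalF mu z + (2 * pi * k%:R)%:C)%C.
Proof.
move=> hmu z0; elim: k => [|k IH]; first by rewrite mulr0 !addr0.
rewrite -[k.+1%:R]natr1 mulrDr mulr1 rmorphD /= addrA hmu ?IH ?addrA //.
by move: z0; case: (z) => a b /=; rewrite ?addr0.
Qed.

Lemma atoms_not_2pi_apart mu p (k : nat) : inL mu -> (0 < k)%N ->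
  (0 < mu [set p])%E -> (0 < mu [set (p + 2 * pi * k%:R)%R])%E -> False.
Proof.
move=> hmu k0 ma mb; set c := 2 * pi * k%:R in mb.
have a0 : 0 < fine (mu [set p]) by rewrite -lte_fin fineK // fin_num_measure.
have b0 : 0 < fine (mu [set p + c]) by rewrite -lte_fin fineK // fin_num_measure.
set a := fine _ in a0; set b := fine _ in b0; set y := Num.min a b.
have y0 : 0 < y by rewrite lt_min a0 b0.
set r := complex.Re (reciprocalF mu (p +i* y)%C).
have r1 : `|r| <= 1.
  rewrite -(ler_pM2l a0) mulr1.
  by rewrite (le_trans (atom_Re_reciprocalF mu p _ y0)) ?ge_min ?lexx.
have rc1 : `|r + c| <= 1.
  rewrite -(ler_pM2l b0) mulr1 (le_trans _ (_ : y <= b)) ?ge_min ?lexx ?orbT //.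
  have := atom_Re_reciprocalF mu (p + c) _ y0.
  have -> : ((p + c) +i* y)%C = ((p +i* y) + c%:C)%C.
    by apply/eqP; rewrite eq_complex /= addr0 !eqxx.
  by rewrite reciprocalF_shift_nat //= -/r.
have c2 : 2 < c.
  have k1 : 1 <= k%:R :> R by rewrite ler1n.
  by have := pi_ge2 R; rewrite /c; nra.
by move: r1 rc1; rewrite !ler_norml; lra.
Qed.

End cauchy.

Section coset_atoms.
Context {R : realType} {mu : probability R R}.
Hypothesis hmu : inL mu.
Implicit Types x s t : R.

Lemma atom_coset2pi_uniq {x s t} : coset2pi x s -> coset2pi x t ->
  (0 < mu [set s])%E -> (0 < mu [set t])%E -> s = t.
Proof.
move=> [m _ <-] [n _ <-].
wlog mn : m n / m <= n.
  by move=> W; have [/W//|/ltW/W W' ms mt] := lerP m n; rewrite W'.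
have [k ->] : exists k : nat, n = m + k%:Z.
  by exists `|n - m|%N; rewrite gez0_abs ?subr_ge0 // addrCA subrr addr0.
case: k => [|k] ms mt; first by rewrite addr0.
exfalso; apply: (atoms_not_2pi_apart _ _ k.+1 hmu erefl ms).
by rewrite -addrA -mulrDr -[k.+1%:R]/(k.+1%:~R) -intrD.
Qed.

Lemma measure_coset2pi_atom {x t} : coset2pi x t -> (0 < mu [set t])%E ->
  mu (coset2pi x) = mu [set t].
Proof.
move=> xt mt; apply: measure_countable_atom => //.
  exact: countable_coset2pi.
move=> s xs st; apply/eqP; rewrite eq_le measure_ge0 andbT leNgt.
apply/negP => ms.
exact: st (atom_coset2pi_uniq xs xt ms mt).
Qed.

Lemma measure_coset2pi_null x :
  (forall n : int, mu [set (x + 2 * pi * n%:~R)%R] = 0%E) ->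
  mu (coset2pi x) = 0%E.
Proof.
move=> null; apply: measure_countable_null => //.
  exact: countable_coset2pi.
by move=> _ [n _ <-]; exact: null.
Qed.

Lemma Wmap_set1 x : Wmap mu [set expmi x] = mu (coset2pi x).
Proof. by rewrite /Wmap /pushforward expmi_preimage. Qed.

End coset_atoms.

Theorem proposition4p12 (R : realType) (mu : probability R R) (hmu : inL mu)
  (x : R) :
  (((0 < mu [set x])%E ->
      (0 < Wmap mu [set expmi x])%E /\ Wmap mu [set expmi x] = mu [set x])
  /\
  ((0 < Wmap mu [set expmi x])%E ->
      exists n : int,
        [/\ (0 < mu [set (x + 2 * pi * n%:~R)%R])%E,
            mu [set (x + 2 * pi * n%:~R)%R] = Wmap mu [set expmi x]
          & forall m : int, (0 < mu [set (x + 2 * pi * m%:~R)%R])%E -> m = n])).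
Proof.
rewrite Wmap_set1; split.
  by move=> mx; rewrite (measure_coset2pi_atom hmu (coset2pi_refl x) mx).
move=> Wx; have [n mn] : exists n : int, (0 < mu [set (x + 2 * pi * n%:~R)%R])%E.
  apply: contrapT => /forallNP none.
  move: Wx; rewrite measure_coset2pi_null ?ltxx // => n.
  by apply/eqP; rewrite eq_le measure_ge0 andbT leNgt; apply/negP/none.
have xn : coset2pi x (x + 2 * pi * n%:~R) by exists n.
exists n; split => //; first by rewrite (measure_coset2pi_atom hmu xn mn).
move=> m mm; have xm : coset2pi x (x + 2 * pi * m%:~R) by exists m.
have /addrI/mulfI := atom_coset2pi_uniq hmu xm xn mm mn.
move=> /(_ (mulf_neq0 _ _))/intr_inj; apply.
  by rewrite pnatr_eq0.
by rewrite gt_eqF ?pi_gt0.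
Qed.
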